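(* Let $G$ and $H$ be graphs with $\chi_v(G)=\chi_v(H)=t$, and assume every optimal vector coloring of $G$ is injective. Then: (i) every homomorphism $G\to H$ is injective; (ii) if additionally every optimal vector coloring $g\mapsto p_g$ of $G$ satisfies, for all $g,g'\in V(G)$, $\langle p_g,p_{g'}\rangle\le-\frac{1}{t-1}$ if and only if $g\sim_G g'$, then every homomorphism $G\to H$ is an isomorphism from $G$ onto an induced subgraph of $H$.
   Context: A vector $t$-coloring of a graph ($t\ge2$) assigns unit vectors in some $\mathbb{R}^d$ to the vertices so that $\langle p_i,p_j\rangle\le-1/(t-1)$ whenever $i\sim j$. $\chi_v$ is the least $t\ge2$ admitting a vector $t$-coloring; an optimal vector coloring is a vector $\chi_v$-coloring. A vector coloring is injective if distinct vertices receive distinct vectors. A homomorphism is an adjacency-preserving map between vertex sets. *)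

From HB Require Import structures.
From mathcomp Require Import all_boot all_order all_algebra.
From mathcomp Require Import reals.
Set Implicit Arguments. Unset Strict Implicit. Unset Printing Implicit Defensive.
Import Order.TTheory GRing.Theory Num.Theory.
Local Open Scope ring_scope.

Definition simple_graph (T : finType) (e : rel T) : Prop :=
  symmetric e /\ irreflexive e.

Definition dotv (R : realType) (d : nat) (u v : 'rV[R]_d) : R :=
  \sum_(i < d) u 0 i * v 0 i.

Definition vector_coloring (R : realType) (T : finType) (e : rel T) (t : R)
    (d : nat) (p : T -> 'rV[R]_d) : Prop :=
  (forall x, dotv (p x) (p x) = 1) /\
  (forall x y, e x y -> dotv (p x) (p y) <= - (1 / (t - 1))).

Definition has_vector_coloring (R : realType) (T : finType) (e : rel T) (t : R)
  : Prop := exists d (p : T -> 'rV[R]_d), @vector_coloring R T e t d p.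

Definition is_vchi (R : realType) (T : finType) (e : rel T) (t : R) : Prop :=
  2 <= t /\ has_vector_coloring e t /\
  (forall t', 2 <= t' -> has_vector_coloring e t' -> t <= t').

Definition optimal_vector_coloring (R : realType) (T : finType) (e : rel T)
    (d : nat) (p : T -> 'rV[R]_d) : Prop :=
  exists t, is_vchi e t /\ @vector_coloring R T e t d p.

Definition graph_hom (T U : finType) (eT : rel T) (eU : rel U) (f : T -> U)
  : Prop := forall x y, eT x y -> eU (f x) (f y).

From HB Require Import structures.
From mathcomp Require Import all_boot all_order all_algebra.
From mathcomp Require Import reals.
Set Implicit Arguments. Unset Strict Implicit. Unset Printing Implicit Defensive.
Import Order.TTheory GRing.Theory Num.Theory.
Local Open Scope ring_scope.

(* Composing a vector t-colouring of H with a homomorphism f : G -> H gives a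
   vector t-colouring of G, which is optimal because chi_v(G) = t; so every
   property of all optimal colourings of G transfers to this pullback, and
   through it to f. *)

Section PullbackColoring.

Variables (R : realType) (T U : finType) (eT : rel T) (eU : rel U).
Variables (t : R) (f : T -> U).
Hypothesis f_hom : graph_hom eT eU f.

Lemma vector_coloring_comp d (q : U -> 'rV[R]_d) :
  vector_coloring eU t q -> vector_coloring eT t (q \o f).
Proof.
case=> q_unit q_edge; split=> [x | x y /f_hom]; [exact: q_unit | exact: q_edge].
Qed.

Hypothesis vchiT : is_vchi eT t.

Lemma optimal_vector_coloring_comp d (q : U -> 'rV[R]_d) :
  vector_coloring eU t q -> optimal_vector_coloring eT (q \o f).
Proof. by move=> q_col; exists t; split; last exact: vector_coloring_comp. Qed.

Hypothesis colU : has_vector_coloring eU t.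

Lemma hom_injective_of_optimal_injective :
  (forall d (p : T -> 'rV[R]_d), optimal_vector_coloring eT p -> injective p) ->
  injective f.
Proof.
move=> opt_inj; have [d [q q_col]] := colU.
exact: inj_compr (opt_inj _ _ (optimal_vector_coloring_comp q_col)).
Qed.

Lemma hom_reflects_edges :
  (forall d (p : T -> 'rV[R]_d), optimal_vector_coloring eT p ->
     forall x y, (dotv (p x) (p y) <= - (1 / (t - 1))) <-> eT x y) ->
  forall x y, eU (f x) (f y) = eT x y.
Proof.
move=> opt_edges x y; have [d [q q_col]] := colU.
apply/idP/idP => [eU_fxy | /f_hom //].
apply/(opt_edges _ _ (optimal_vector_coloring_comp q_col)).
by case: q_col => _ q_edge; exact: q_edge eU_fxy.
Qed.

End PullbackColoring.

Theorem lemma2p2 (R : realType) (TG TH : finType) (eG : rel TG) (eH : rel TH)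
  (t : R) :
  simple_graph eG -> simple_graph eH ->
  is_vchi eG t -> is_vchi eH t ->
  (forall d (p : TG -> 'rV[R]_d), @optimal_vector_coloring R TG eG d p -> injective p) ->
  (forall f : TG -> TH, graph_hom eG eH f -> injective f) /\
  ((forall d (p : TG -> 'rV[R]_d), @optimal_vector_coloring R TG eG d p ->
      forall g g', (dotv (p g) (p g') <= - (1 / (t - 1))) <-> eG g g') ->
   forall f : TG -> TH, graph_hom eG eH f ->
     injective f /\ (forall g g', eH (f g) (f g') = eG g g')).
Proof.
move=> _ _ vchiG [_ [colH _]] opt_inj.
have f_inj f (f_hom : graph_hom eG eH f) : injective f.
  exact: hom_injective_of_optimal_injective f_hom vchiG colH opt_inj.
split=> // opt_edges f f_hom; split; first exact: f_inj.
exact: hom_reflects_edges f_hom vchiG colH opt_edges.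
Qed.
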